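(* Let $G$ be a graph and let $xTy$ be a path-thread of $G$ with $x\ne y$. Let $T'$ be the path obtained from $T$ by deleting $x$ and $y$, and suppose $v(T')=3m+2$ for some integer $m\ge1$. Let $G'$ be obtained from $G-V(T')$ by adding a new vertex $z$ and the two new edges $xz$ and $yz$. Then $\lambda(G')\ge v(G')/4$ implies $\lambda(G)\ge v(G)/4$.
   Context: All graphs are finite and simple. $v(G)$ is the number of vertices. $\lambda(G)$ denotes the maximum number of pairwise vertex-disjoint subgraphs of $G$ each of which is a path with exactly two edges. A path-thread of $G$ is a path $P$ in $G$, maximal under inclusion among paths, such that every internal vertex of $P$ has degree $2$ in $G$; its end-vertices are $x,y$, written $xPy$. *)

(* A finite simple graph is a symmetric irreflexive
   relation e : rel V on a finType V. *)
From mathcomp Require Import all_boot.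
Set Implicit Arguments. Unset Strict Implicit. Unset Printing Implicit Defensive.

Section Graphs.
Variable V : finType.
Variable e : rel V.

Definition deg (v : V) : nat := #|[set w | e v w]|.

Definition is_gpath (p : seq V) : bool :=
  if p is a :: q then path e a q && uniq p else false.

Definition internal (p : seq V) : seq V := drop 1 (take (size p).-1 p).

Definition internal_deg2 (p : seq V) : bool :=
  all (fun v => deg v == 2) (internal p).

Definition pedges (p : seq V) : seq (V * V) := zip p (behead p).

Definition sub_gpath (p q : seq V) : bool :=
  all (fun v => v \in q) p &&
  all (fun ab => ((ab.1, ab.2) \in pedges q) || ((ab.2, ab.1) \in pedges q))
      (pedges p).

(* path-thread: a path whose internal vertices have degree 2 in G, maximal
   under inclusion among such paths *)
Definition is_thread (p : seq V) : Prop :=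
  [/\ is_gpath p, internal_deg2 p &
      forall q, is_gpath q -> internal_deg2 q -> sub_gpath p q -> size q = size p].

Definition P3 (t : V * V * V) : bool :=
  [&& e t.1.1 t.1.2, e t.1.2 t.2 & t.1.1 != t.2].

Definition tverts (t : V * V * V) : seq V := [:: t.1.1; t.1.2; t.2].

Definition packing (P : {set V * V * V}) : bool :=
  [forall t in P, P3 t] &&
  [forall t1 in P, forall t2 in P,
     (t1 != t2) ==> ~~ has (fun v => v \in tverts t2) (tverts t1)].

Definition lam : nat := \max_(P : {set V * V * V} | packing P) #|P|.

End Graphs.

(* G' : from G - V(T') (T' given by the vertex list s) add new vertex z
   (= None) with edges xz, yz *)
Definition cadj (V : finType) (e : rel V) (s : seq V) (x y : V)
  : rel (option {v : V | v \notin s}) :=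
  fun a b => match a, b with
  | Some u, Some w => e (val u) (val w)
  | None, Some w => (val w == x) || (val w == y)
  | Some u, None => (val u == x) || (val u == y)
  | None, None => false
  end.
Arguments cadj [V] e s x y _ _.

From mathcomp Require Import all_boot zify.
Set Implicit Arguments. Unset Strict Implicit. Unset Printing Implicit Defensive.

(* Write T' = s_0 ... s_(3m+1).  Take a maximum P3-packing of G'.  At most one
   of its paths passes through z; reroute it into T' by replacing z with the
   neighbour of x or y on T', or, when z is its middle vertex, by the path
   x s_0 s_1.  This uses at most two vertices at one end of T', so 3m
   consecutive vertices of T' stay free and carry m more disjoint P3s.  Hence
   lambda(G) >= lambda(G') + m, and v(G) = v(G') + 3m + 1 <= 4 lambda(G') + 3m + 1
   <= 4 lambda(G) as m >= 1. *)

Lemma pairwise_neqP (T : eqType) (r : rel T) (L : seq T) :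
  symmetric r -> uniq L ->
  reflect {in L &, forall a b, a != b -> r a b} (pairwise r L).
Proof.
move=> rsym; elim: L => [|h L IH] /= uL; first by apply: (iffP idP).
case/andP: uL => hL /IH{}IH; apply: (iffP andP) => [[/allP rh /IH rL]|rL].
- move=> a b; rewrite !inE => /orP[/eqP->|aL] /orP[/eqP->|bL]; rewrite ?eqxx //.
  + by move=> _; apply: rh.
  + by move=> _; rewrite rsym; apply: rh.
  + exact: rL.
split; last by apply/IH => a b aL bL; apply: rL; rewrite inE ?aL ?bL orbT.
apply/allP => b bL; apply: rL; rewrite ?inE ?eqxx ?bL ?orbT //.
by apply: contraNneq hL => ->.
Qed.

Lemma mem_drop_notin_take (T : eqType) (s : seq T) n v :
  uniq s -> v \in drop n s -> v \notin take n s.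
Proof.
by rewrite -[s in uniq s](cat_take_drop n) cat_uniq => /and3P[_ /hasPn D _] /D.
Qed.

Section Packing.
Variables (T : finType) (e : rel T).

Definition tdisjoint (a b : T * T * T) : bool :=
  ~~ has (fun v => v \in tverts b) (tverts a).

Lemma tdisjointP a b :
  reflect (forall v, v \in tverts a -> v \in tverts b -> False) (tdisjoint a b).
Proof.
apply: (iffP hasPn) => D v va; first by apply/negP; exact: D.
by apply/negP; exact: D.
Qed.

Lemma tdisjoint_sym : symmetric tdisjoint.
Proof. by move=> a b; apply/tdisjointP/tdisjointP => D v va vb; exact: D vb va. Qed.

Lemma tdisjoint_irr : irreflexive tdisjoint.
Proof.
by move=> a; apply/negbTE/negP => /tdisjointP/(_ a.1.1); rewrite inE eqxx; apply.
Qed.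

Lemma packingP P :
  packing e P ->
  {in P, forall t, P3 e t} /\ {in P &, forall a b, a != b -> tdisjoint a b}.
Proof.
case/andP => /forallP P3P /forallP DP; split=> [t tP | a b aP bP].
- by move: (P3P t); rewrite tP.
- by move: (DP a); rewrite aP => /forallP/(_ b); rewrite bP /= => /implyP D /D.
Qed.

Lemma size_le_lam L : all (P3 e) L -> pairwise tdisjoint L -> size L <= lam e.
Proof.
move=> P3L DL; have uL : uniq L := pairwise_uniq tdisjoint_irr DL.
have -> : size L = #|[set t in L]| by rewrite cardsE (card_uniqP uL).
apply: leq_bigmax_cond; apply/andP; split.
- by apply/forallP => t; apply/implyP; rewrite inE; exact: (allP P3L).
apply/forallP => a; apply/implyP; rewrite inE => aL.
apply/forallP => b; apply/implyP; rewrite inE => bL; apply/implyP.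
exact: (elimT (pairwise_neqP tdisjoint_sym uL) DL).
Qed.

Lemma lam_attained : exists2 P, packing e P & #|P| = lam e.
Proof.
have P0 : packing e set0 by apply/andP; split; apply/forallP => t; rewrite inE.
exists [arg max_(P > set0 | packing e P) #|P|]; first by case: arg_maxnP.
by rewrite /lam (bigmax_eq_arg set0 P0).
Qed.

Fixpoint chunks (l : seq T) : seq (T * T * T) :=
  if l is a :: b :: c :: r then (a, b, c) :: chunks r else [::].

Lemma size_chunks l : size (chunks l) = size l %/ 3.
Proof.
have [n] := ubnP (size l); elim: n l => // n IH [|a [|b [|c r]]] //= lt_r.
rewrite IH; last lia.
by rewrite -[(size r).+3]/(1 * 3 + size r) divnMDl.
Qed.

Lemma mem_chunks l t v : t \in chunks l -> v \in tverts t -> v \in l.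
Proof.
have [n] := ubnP (size l); elim: n l => // n IH [|a [|b [|c r]]] //= lt_r.
rewrite inE => /orP[/eqP-> | tr vt]; first by rewrite !inE => /or3P[]->; rewrite ?orbT.
by rewrite !inE (IH r) ?orbT //; lia.
Qed.

Lemma chunks_P3 l : sorted e l -> uniq l -> all (P3 e) (chunks l).
Proof.
have [n] := ubnP (size l); elim: n l => // n IH [|a [|b [|c r]]] //= lt_r.
case/and3P=> ab bc /path_sorted cr /and4P[/[!inE] /norP[_ /norP[ac _]] _ _ ur].
by rewrite /P3 /= ab bc ac IH //; lia.
Qed.

Lemma chunks_pairwise l : uniq l -> pairwise tdisjoint (chunks l).
Proof.
have [n] := ubnP (size l); elim: n l => // n IH [|a [|b [|c r]]] //= lt_r.
case/and4P => /[!inE] /norP[_ /norP[_ ar]] /norP[_ br] cr ur.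
have lt_rn : size r < n by rewrite ltnS in lt_r; exact: ltnW (ltnW lt_r).
rewrite IH ?andbT //; apply/allP => t tr; apply/tdisjointP => v vt /(mem_chunks tr).
by move: vt; rewrite !inE => /or3P[]/eqP->; apply/negP.
Qed.

End Packing.

Section Thread.
Variables (V : finType) (e : rel V) (x y : V) (s : seq V) (m : nat).
Hypotheses (esym : symmetric e) (path_xsy : path e x (rcons s y))
  (uniq_xsy : uniq (x :: rcons s y)) (size_s : size s = 3 * m + 2).

Local Notation W := {v : V | v \notin s}.
Local Notation G' := (cadj e s x y).

Lemma x_notin_s : x \notin s.
Proof. by move: uniq_xsy; rewrite /= mem_rcons inE negb_or => /andP[/andP[]]. Qed.

Lemma uniq_s : uniq s.
Proof. by move: uniq_xsy; rewrite /= rcons_uniq => /andP[_ /andP[]]. Qed.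

Lemma path_s : path e x s.
Proof. by move: path_xsy; rewrite rcons_path => /andP[]. Qed.

Lemma adj_x_s0 : e x (nth x s 0).
Proof. by move/(pathP x): path_s => /(_ 0); apply; rewrite size_s addn2. Qed.

Lemma adj_s0_s1 : e (nth x s 0) (nth x s 1).
Proof. by move/(pathP x): path_s => /(_ 1); apply; rewrite size_s addn2. Qed.

Definition inner_nb (b : W) : V := if val b == x then nth x s 0 else last x s.

Lemma inner_nb_in b : inner_nb b \in s.
Proof.
by rewrite /inner_nb -nth_last; case: ifP => _; apply: mem_nth; rewrite size_s addn2.
Qed.

Lemma adj_inner_nb b : (val b == x) || (val b == y) -> e (val b) (inner_nb b).
Proof.
rewrite /inner_nb; case: (eqVneq (val b) x) => [-> _ | _ /= /eqP->].
  exact: adj_x_s0.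
by rewrite esym; move: path_xsy; rewrite rcons_path => /andP[].
Qed.

(* The new vertex z is [None]; the last branch is never a P3 of G'. *)
Definition lift (t : option W * option W * option W) : V * V * V :=
  match t with
  | (Some a, Some b, Some c) => (val a, val b, val c)
  | (None, Some b, Some c) => (inner_nb b, val b, val c)
  | (Some a, Some b, None) => (val a, val b, inner_nb b)
  | (_, None, _) => (x, nth x s 0, nth x s 1)
  | (None, Some _, None) => (x, x, x)
  end.

Lemma P3_lift t : P3 G' t -> P3 e (lift t).
Proof.
have inner_nb_neq (a b : W) : inner_nb b != sval a.
  by apply/eqP => E; move: (valP a); rewrite /= -E inner_nb_in.
case: t => [[[a|] [b|]] [c|]]; rewrite /P3 /cadj //= ?andbF //.
- by case/and3P=> -> bxy _; rewrite adj_inner_nb //= eq_sym inner_nb_neq.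
- case/and3P=> _ _ _; rewrite adj_x_s0 adj_s0_s1 /=.
  by apply: contraNneq x_notin_s => ->; rewrite mem_nth // size_s addn2.
- by case/and3P=> bxy -> _; rewrite esym adj_inner_nb // inner_nb_neq.
Qed.

Variable P' : {set option W * option W * option W}.
Hypothesis packing_P' : packing G' P'.

Lemma packing_None_unique t1 t2 : t1 \in P' -> t2 \in P' ->
  None \in tverts t1 -> None \in tverts t2 -> t1 = t2.
Proof.
move=> t1P t2P z1 z2; apply/eqP; apply: contraT => ne.
by move/tdisjointP: ((packingP packing_P').2 _ _ t1P t2P ne) => /(_ None z1 z2).
Qed.

(* The number of initial vertices of T' used by the rerouted P3 through z. *)
Definition offset_of (t : option W * option W * option W) : nat :=
  if t.1.2 is Some b then if val b == x then 1 else 0 else 2.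

Definition offset : nat :=
  if [pick t in P' | None \in tverts t] is Some t then offset_of t else 0.

Lemma offset_None t : t \in P' -> None \in tverts t -> offset = offset_of t.
Proof.
move=> tP zt; rewrite /offset; case: pickP => [t' /andP[t'P zt'] | /(_ t)].
- by rewrite (packing_None_unique t'P tP).
- by rewrite tP zt.
Qed.

Lemma offset_le2 : offset <= 2.
Proof.
by rewrite /offset /offset_of; case: pickP => // [[[_ [b|]] _]] _ //=; case: ifP.
Qed.

Definition mid : seq V := take (3 * m) (drop offset s).

Lemma size_mid : size mid = 3 * m.
Proof. by rewrite size_takel // size_drop size_s; have := offset_le2; lia. Qed.

Lemma mid_sub v : v \in mid -> v \in s.
Proof. by move/mem_take/mem_drop. Qed.

Lemma s_prefix_notin_mid i : i < offset -> nth x s i \notin mid.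
Proof.
move=> lt_i; apply/negP => /mem_take /(mem_drop_notin_take uniq_s)/negP; apply.
rewrite -(nth_take _ lt_i) mem_nth // size_takel // size_s.
by have := offset_le2; lia.
Qed.

Lemma last_notin_mid : offset = 0 -> last x s \notin mid.
Proof.
rewrite /mid => ->; rewrite drop0; apply: mem_drop_notin_take uniq_s _.
have -> : last x s = nth x (drop (3 * m) s) 1.
  by rewrite nth_drop -nth_last size_s addn2 addn1.
by rewrite mem_nth // size_drop size_s; lia.
Qed.

Lemma end_nb_notin_mid t b : t \in P' -> None \in tverts t -> t.1.2 = Some b ->
  inner_nb b \notin mid.
Proof.
move=> tP zt tb; move: (offset_None tP zt); rewrite /offset_of tb /inner_nb.
case: ifP => _ off; last exact: last_notin_mid.
by apply: s_prefix_notin_mid; rewrite off.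
Qed.

(* The invariant of the vertices of [lift t] that makes the lifted paths
   pairwise disjoint and disjoint from [chunks mid]. *)
Definition covered (t : option W * option W * option W) (v : V) : bool :=
  if insub v : option W is Some w then Some w \in tverts t
  else (None \in tverts t) && (v \notin mid).

Lemma covered_val t (w : W) : Some w \in tverts t -> covered t (val w).
Proof. by rewrite /covered valK. Qed.

Lemma covered_s t v : v \in s -> None \in tverts t -> v \notin mid -> covered t v.
Proof. by move=> vs zt vm; rewrite /covered insubN ?negbK // zt vm. Qed.

Lemma covered_disjoint t1 t2 v : t1 \in P' -> t2 \in P' -> t1 != t2 ->
  covered t1 v -> covered t2 v -> False.
Proof.
move=> t1P t2P ne; have /tdisjointP D := (packingP packing_P').2 _ _ t1P t2P ne.
rewrite /covered; case: (insub v) => [w|] c1 c2; first exact: D c1 c2.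
by case/andP: c1 => z1 _; case/andP: c2 => z2 _; exact: D z1 z2.
Qed.

Lemma covered_notin_mid t v : covered t v -> v \notin mid.
Proof.
apply: contraTN => vm.
by rewrite /covered insubN ?negbK ?mid_sub // vm andbF.
Qed.

Lemma lift_covered t v : t \in P' -> P3 G' t -> v \in tverts (lift t) -> covered t v.
Proof.
case: t => [[[a|] [b|]] [c|]] tP; rewrite /P3 /cadj //= ?andbF // => P3t.
all: rewrite !inE => /or3P[]/eqP->.
all: try by apply: covered_val; rewrite !inE eqxx ?orbT.
all: try by apply: covered_s; rewrite ?inner_nb_in ?inE ?eqxx ?orbT //;
  apply: (end_nb_notin_mid tP); rewrite ?inE ?eqxx ?orbT.
all: have zt : None \in tverts (Some a, None, Some c) by rewrite !inE eqxx orbT.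
all: have off2 : offset = 2 := offset_None tP zt.
- case/and3P: P3t => /orP[/eqP<-|/eqP ay] /orP[/eqP<-|/eqP cy] ac.
  1-3: by apply: covered_val; rewrite !inE eqxx ?orbT.
  have /val_inj ac' : sval a = sval c by rewrite ay cy.
  by rewrite ac' eqxx in ac.
all: apply: covered_s; rewrite // ?mem_nth ?s_prefix_notin_mid ?off2 //.
all: by rewrite size_s addn2.
Qed.

Lemma card_packing_add_le_lam : #|P'| + m <= lam e.
Proof.
have [P3P' _] := packingP packing_P'.
pose L := map lift (enum P') ++ chunks mid.
have -> : #|P'| + m = size L.
  by rewrite size_cat size_map size_chunks size_mid -cardE mulKn.
have uniq_mid : uniq mid by apply/take_uniq/drop_uniq/uniq_s.
apply: size_le_lam; rewrite /L ?all_cat ?pairwise_cat.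
- rewrite all_map chunks_P3 ?andbT //; last first.
    exact/take_sorted/drop_sorted/path_sorted/path_s.
  by apply/allP => t; rewrite mem_enum => tP; exact/P3_lift/P3P'.
rewrite pairwise_map chunks_pairwise // andbT; apply/andP; split.
- apply/allrelP => a c /mapP[t]; rewrite mem_enum => tP -> cm.
  apply/tdisjointP => v /(lift_covered tP (P3P' t tP))/covered_notin_mid/negP.
  by move=> + /(mem_chunks cm); apply.
apply/(pairwise_neqP _ (enum_uniq _)) => [a b | a b]; first exact: tdisjoint_sym.
rewrite !mem_enum => aP bP ne; apply/tdisjointP => v va vb.
exact: covered_disjoint aP bP ne
  (lift_covered aP (P3P' a aP) va) (lift_covered bP (P3P' b bP) vb).
Qed.

End Thread.

Theorem lemma3p2 (V : finType) (e : rel V) (esym : symmetric e)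
  (eirr : irreflexive e) (x y : V) (s : seq V) (m : nat) :
  x != y ->
  is_thread e (x :: rcons s y) ->
  1 <= m ->
  size s = 3 * m + 2 ->
  #|{: option ({v : V | v \notin s})}| <= 4 * lam (cadj e s x y) ->
  #|V| <= 4 * lam e.
Proof.
move=> _ [/andP[path_xsy uniq_xsy] _ _] m_ge1 size_s.
rewrite card_option card_sig; set c := #|[pred v | v \notin s]|.
have [P' packing_P' <-] := lam_attained (cadj e s x y).
have := card_packing_add_le_lam esym path_xsy uniq_xsy size_s packing_P'.
have : c + size s = #|V|.
  by rewrite -(card_uniqP (uniq_s uniq_xsy)) addnC -(cardC (mem s)).
(* [#|P'|] occurs at two syntactically different types, which lia would read
   as distinct atoms. *)
rewrite size_s; set p := #|P'|; lia.
Qed.
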